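(* Let $\mathcal{X}$ be a compact design space and, for $i=1,\dots,\nu$, let $\eta_i(x,\theta_i)$ be regression functions with parameters in compact sets $\Theta_i\subset\mathbb{R}^{d_i}$ such that (A1) each $\eta_i(\cdot,\theta_i)$ is continuously differentiable with respect to $\theta_i$, and (A2) for every design $\xi$ with $T_{\mathrm{P}}(\xi)>0$ and every pair $(i,j)$ with $p_{i,j}\neq0$, the infimum $\inf_{\theta_{i,j}\in\Theta_j}\int_{\mathcal{X}}[\eta_i(x,\overline{\theta}_i)-\eta_j(x,\theta_{i,j})]^2\xi(dx)$ is attained at a unique point $\widehat{\theta}_{i,j}(\xi)$ in the interior of $\Theta_j$. Here $p_{i,j}\ge0$ are weights, $\overline{\theta}_i\in\Theta_i$ fixed, and $T_{\mathrm{P}}(\xi)=\sum_{i,j}p_{i,j}\inf_{\theta_{i,j}\in\Theta_j}\int_{\mathcal{X}}[\eta_i(x,\overline{\theta}_i)-\eta_j(x,\theta_{i,j})]^2\xi(dx)$. Consider the algorithm: start with a design $\xi_0$ with $T_{\mathrm{P}}(\xi_0)>0$; given $\xi_s$ with support $\mathcal{S}_{[s]}$, (1) set $\mathcal{S}_{[s+1]}=\mathcal{S}_{[s]}\cup\mathcal{E}_{[s]}$ where $\mathcal{E}_{[s]}$ is the set of all local maxima of $x\mapsto\Psi(x,\xi_s)$ on $\mathcal{X}$; (2) choose weights $\omega_{[s+1]}$ maximizing $\omega\mapsto T_{\mathrm{P}}(\{\mathcal{S}_{[s+1]},\omega\})$ over probability weight vectors on $\mathcal{S}_{[s+1]}$,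 discard zero-weight points, and let $\xi_{s+1}$ be the resulting design. Then at the end of each iteration, the function $x\mapsto\Psi(x,\xi_{s+1})$ takes one and the same value at all support points of $\xi_{s+1}$.
   Context: A design is a probability measure on $\mathcal{X}$ with finite support; $\{\mathcal{S},\omega\}$ denotes the design on the finite set $\mathcal{S}$ with weight vector $\omega$. Under (A1)–(A2), for a design $\xi$ with $T_{\mathrm{P}}(\xi)>0$, $$\Psi(x,\xi)=\sum_{i,j=1}^{\nu}p_{i,j}\big[\eta_i(x,\overline{\theta}_i)-\eta_j(x,\widehat{\theta}_{i,j}(\xi))\big]^2.$$ *)

From HB Require Import structures.
From mathcomp Require Import all_boot all_order all_algebra.
From mathcomp Require Import all_classical all_reals all_analysis.
Import Order.TTheory GRing.Theory Num.Theory.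
Import numFieldNormedType.Exports.
Local Open Scope classical_set_scope.
Local Open Scope ring_scope.

(* A design {S, w} is given by a duplicate-free list S of points of X and a
   weight function w (only its values on S matter), nonnegative on S, summing
   to 1 over S. Integration against the design is the weighted sum over S. *)

Definition is_design {R : realType} {k : nat} (X : set 'rV[R]_k)
  (S : seq 'rV[R]_k) (w : 'rV[R]_k -> R) : Prop :=
  [/\ uniq S, (forall x, x \in S -> X x), (forall x, x \in S -> 0 <= w x)
    & \sum_(x <- S) w x = 1].

Definition is_design_supp {R : realType} {k : nat} (X : set 'rV[R]_k)
  (S : seq 'rV[R]_k) (w : 'rV[R]_k -> R) : Prop :=
  is_design X S w /\ (forall x, x \in S -> 0 < w x).

Definition sqdist {R : realType} {k nu : nat} {d : 'I_nu -> nat}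
  (eta : forall i : 'I_nu, 'rV[R]_k -> 'rV[R]_(d i) -> R)
  (thetabar : forall i : 'I_nu, 'rV[R]_(d i))
  (i j : 'I_nu) (S : seq 'rV[R]_k) (w : 'rV[R]_k -> R) (th : 'rV[R]_(d j)) : R :=
  \sum_(x <- S) w x * (eta i x (thetabar i) - eta j x th) ^+ 2.

Definition infdist {R : realType} {k nu : nat} {d : 'I_nu -> nat}
  (eta : forall i : 'I_nu, 'rV[R]_k -> 'rV[R]_(d i) -> R)
  (thetabar : forall i : 'I_nu, 'rV[R]_(d i))
  (Theta : forall i : 'I_nu, set 'rV[R]_(d i))
  (i j : 'I_nu) (S : seq 'rV[R]_k) (w : 'rV[R]_k -> R) : R :=
  inf [set sqdist eta thetabar i j S w th | th in Theta j].

Definition TP {R : realType} {k nu : nat} {d : 'I_nu -> nat}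
  (eta : forall i : 'I_nu, 'rV[R]_k -> 'rV[R]_(d i) -> R)
  (thetabar : forall i : 'I_nu, 'rV[R]_(d i))
  (Theta : forall i : 'I_nu, set 'rV[R]_(d i))
  (p : 'I_nu -> 'I_nu -> R) (S : seq 'rV[R]_k) (w : 'rV[R]_k -> R) : R :=
  \sum_(i < nu) \sum_(j < nu) p i j * infdist eta thetabar Theta i j S w.

Definition thetahat {R : realType} {k nu : nat} {d : 'I_nu -> nat}
  (eta : forall i : 'I_nu, 'rV[R]_k -> 'rV[R]_(d i) -> R)
  (thetabar : forall i : 'I_nu, 'rV[R]_(d i))
  (Theta : forall i : 'I_nu, set 'rV[R]_(d i))
  (i j : 'I_nu) (S : seq 'rV[R]_k) (w : 'rV[R]_k -> R) : 'rV[R]_(d j) :=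
  xget 0 [set th | Theta j th /\
                   sqdist eta thetabar i j S w th = infdist eta thetabar Theta i j S w].

Definition Psi {R : realType} {k nu : nat} {d : 'I_nu -> nat}
  (eta : forall i : 'I_nu, 'rV[R]_k -> 'rV[R]_(d i) -> R)
  (thetabar : forall i : 'I_nu, 'rV[R]_(d i))
  (Theta : forall i : 'I_nu, set 'rV[R]_(d i))
  (p : 'I_nu -> 'I_nu -> R) (x : 'rV[R]_k) (S : seq 'rV[R]_k) (w : 'rV[R]_k -> R) : R :=
  \sum_(i < nu) \sum_(j < nu)
     p i j * (eta i x (thetabar i) - eta j x (thetahat eta thetabar Theta i j S w)) ^+ 2.

Definition locmax_on {R : realType} {k : nat} (X : set 'rV[R]_k)
  (f : 'rV[R]_k -> R) (x : 'rV[R]_k) : Prop :=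
  X x /\ \forall y \near x, X y -> f y <= f x.

Definition assumption_A1 {R : realType} {k nu : nat} {d : 'I_nu -> nat}
  (X : set 'rV[R]_k)
  (eta : forall i : 'I_nu, 'rV[R]_k -> 'rV[R]_(d i) -> R)
  (Theta : forall i : 'I_nu, set 'rV[R]_(d i)) : Prop :=
  forall (i : 'I_nu) (x : 'rV[R]_k), X x ->
    exists U : set 'rV[R]_(d i),
      [/\ open U, Theta i `<=` U,
          (forall th, U th -> differentiable (eta i x) th)
        & forall (v : 'rV[R]_(d i)) th, U th ->
            {for th, continuous (fun t => 'D_v (eta i x) t)}].

Definition assumption_A2 {R : realType} {k nu : nat} {d : 'I_nu -> nat}
  (X : set 'rV[R]_k)
  (eta : forall i : 'I_nu, 'rV[R]_k -> 'rV[R]_(d i) -> R)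
  (thetabar : forall i : 'I_nu, 'rV[R]_(d i))
  (Theta : forall i : 'I_nu, set 'rV[R]_(d i))
  (p : 'I_nu -> 'I_nu -> R) : Prop :=
  forall (S : seq 'rV[R]_k) (w : 'rV[R]_k -> R),
    is_design X S w -> 0 < TP eta thetabar Theta p S w ->
    forall i j : 'I_nu, p i j != 0 ->
      exists th : 'rV[R]_(d j),
        [/\ Theta j th,
            sqdist eta thetabar i j S w th = infdist eta thetabar Theta i j S w,
            (forall th', Theta j th' ->
               sqdist eta thetabar i j S w th' = infdist eta thetabar Theta i j S w ->
               th' = th)
          & (Theta j)° th].

(* Moving mass t from a support point y to a point x of S_(s+1) changes T_P at
   rate at least Psi(x) - Psi(y): each inner infimum is attained at a unique
   minimiser thetahat_(i,j), and a unique minimiser of a continuous function on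
   a compact set is stable under small linear perturbations (Danskin).
   Optimality then gives Psi(x) <= Psi(y) whenever y carries positive weight,
   and by symmetry Psi is constant on the support. Assumption (A2) may be
   applied along the iteration because T_P never decreases: S_s is contained in
   S_(s+1), so the old design is among the candidates of the weight
   optimisation. *)

From Pilot Require Import Defs.
From HB Require Import structures.
From mathcomp Require Import all_boot all_order all_algebra.
From mathcomp Require Import all_classical all_reals all_analysis.
From mathcomp Require Import ring lra.
Import Order.TTheory GRing.Theory Num.Theory.
Import numFieldNormedType.Exports.
Local Open Scope classical_set_scope.
Local Open Scope ring_scope.

Section WeightedSums.
Context {R : comPzRingType} {T : eqType}.
Implicit Types (S : seq T) (w F : T -> R).

Definition same_measure S1 w1 S2 w2 :=
  forall F, \sum_(z <- S1) w1 z * F z = \sum_(z <- S2) w2 z * F z.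

Lemma same_measure_mass {S1 w1 S2 w2} :
  same_measure S1 w1 S2 w2 -> \sum_(z <- S1) w1 z = \sum_(z <- S2) w2 z.
Proof.
by move=> /(_ (fun=> 1)); under eq_bigr do rewrite mulr1; under [RHS]eq_bigr do rewrite mulr1.
Qed.

Lemma same_measure_extend0 S1 w1 S2 w2 :
  uniq S1 -> uniq S2 -> {subset S1 <= S2} ->
  (forall z, z \in S1 -> w2 z = w1 z) ->
  (forall z, z \in S2 -> z \notin S1 -> w2 z = 0) ->
  same_measure S1 w1 S2 w2.
Proof.
move=> uS1 uS2 S12 w21 w20 F; symmetry.
rewrite (bigID (mem S1)) /= [X in _ + X]big1_seq ?addr0; last first.
  by move=> z /andP[zS1 zS2]; rewrite w20 ?mul0r.
have S1_perm : perm_eq [seq z <- S2 | z \in S1] S1.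
  apply: uniq_perm; rewrite ?filter_uniq // => z.
  by rewrite mem_filter andb_idr // => /S12.
by rewrite -big_filter (perm_big _ S1_perm); apply: eq_big_seq => z /w21 ->.
Qed.

Lemma big_delta_seq {S x} F :
  uniq S -> x \in S -> \sum_(z <- S) (z == x)%:R * F z = F x.
Proof.
move=> uS xS; rewrite (bigD1_seq x) //= eqxx mul1r big1 ?addr0 //.
by move=> z /negbTE ->; rewrite mul0r.
Qed.

Definition transfer w x y t z := w z + t * ((z == x)%:R - (z == y)%:R).

Lemma sum_transfer {S} w {x y} t F :
  uniq S -> x \in S -> y \in S ->
  \sum_(z <- S) transfer w x y t z * F z = \sum_(z <- S) w z * F z + t * (F x - F y).
Proof.
move=> uS xS yS; rewrite -(big_delta_seq F uS xS) -(big_delta_seq F uS yS).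
by rewrite mulrBr !mulr_sumr -sumrB -big_split /=; apply: eq_bigr => z _; rewrite /transfer; ring.
Qed.

End WeightedSums.

Lemma transfer_ge0 {R : numDomainType} {T : eqType} {S : seq T} {w : T -> R} x y t z :
  (forall z, z \in S -> 0 <= w z) -> z \in S -> 0 <= t -> t <= w y ->
  0 <= transfer w x y t z.
Proof.
move=> w_ge0 + t_ge0 t_le; rewrite /transfer.
have [-> yS|zy zS] := eqVneq z y.
  case: (y == x); first by rewrite subrr mulr0 addr0 w_ge0.
  by rewrite sub0r mulrN1 subr_ge0.
by rewrite subr0 addr_ge0 ?w_ge0 ?mulr_ge0.
Qed.

Lemma const_on_seq {T : eqType} {U : Type} (u : U) (f : T -> U) (s : seq T) :
  {in s &, forall x y, f x = f y} -> exists c, {in s, forall x, f x = c}.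
Proof.
case: s => [|z s] f_eq; first by exists u.
by exists (f z) => x xs; apply: f_eq; rewrite ?mem_head.
Qed.

(* A one-sided Danskin bound for a perturbed unique minimum. *)
Lemma unique_argmin_perturb {R : realType} {T : topologicalType} {A : set T}
    {a b : T -> R} {th0 : T} :
  compact A -> A th0 -> {in A, continuous a} -> {in A, continuous b} ->
  (forall th, A th -> a th0 <= a th) ->
  (forall th, A th -> a th = a th0 -> th = th0) ->
  forall e, 0 < e -> \forall t \near 0^'+,
    forall th, A th -> a th0 + t * (b th0 - e) <= a th + t * b th.
Proof.
move=> cA Ath0 ca cb amin auniq e e_gt0.
have A0 : A !=set0 by exists th0.
pose G th := a th - a th0 + Num.max 0 (b th - (b th0 - e)).
have cG : {within A, continuous G}.
  apply: continuous_in_subspaceT => th Ath.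
  apply: (@continuousD _ _ _ (fun th => a th - a th0)
            (fun th => Num.max 0 (b th - (b th0 - e)))).
    by apply: (@continuousB _ _ _ a (fun=> a th0)); [exact: ca|exact: cst_continuous].
  apply: (@continuous_max _ _ (fun=> 0) (fun th => b th - (b th0 - e))).
    exact: cst_continuous.
  by apply: (@continuousB _ _ _ b (fun=> b th0 - e)); [exact: cb|exact: cst_continuous].
have [c /set_mem Ac Gmin] := compact_EVT_min A0 cA cG.
have [c' /set_mem Ac' bmin] := compact_EVT_min A0 cA (continuous_in_subspaceT cb).
(* G vanishes nowhere on A: at th0 the second summand is e, elsewhere the first is positive *)
have G_gt0 : 0 < G c.
  rewrite /G; have [->|cth0] := eqVneq c th0.
    by rewrite subrr add0r lt_max opprB addrC subrK e_gt0 orbT.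
  have : a th0 < a c.
    by rewrite lt_neqAle amin // andbT; apply/eqP => /esym/(auniq _ Ac); apply/eqP.
  by rewrite -subr_gt0 => /lt_le_trans; apply; rewrite lerDl le_max lexx.
have bc'_le : b c' <= b th0 by apply: bmin; rewrite inE.
have M_gt0 : 0 < b th0 - b c' + 1 by lra.
near=> t.
have tM : t * (b th0 - b c' + 1) <= G c.
  by rewrite -ler_pdivlMr //; near: t; apply: nbhs_right_le; exact: divr_gt0.
have t_ge0 : 0 <= t by near: t; exact: nbhs_right_ge.
move=> th Ath; have [bth_gt|bth_le] := ltP (b th0 - e) (b th).
  by apply: lerD; [exact: amin|apply: ler_wpM2l => //; exact: ltW].
have Gc_le : G c <= a th - a th0.
  have : G th = a th - a th0 by rewrite /G max_l ?addr0 // subr_le0.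
  by move=> <-; apply: Gmin; rewrite inE.
have bth_ge : b c' <= b th by apply: bmin; rewrite inE.
have : t * (b th0 - e - b th) <= t * (b th0 - b c' + 1).
  by apply: ler_wpM2l => //; lra.
lra.
Unshelve. all: by end_near.
Qed.

Section OptimalDesign.
Context {R : realType} {k nu : nat} {d : 'I_nu -> nat} {X : set 'rV[R]_k}
  {eta : forall i : 'I_nu, 'rV[R]_k -> 'rV[R]_(d i) -> R}
  {thetabar : forall i : 'I_nu, 'rV[R]_(d i)}
  {Theta : forall i : 'I_nu, set 'rV[R]_(d i)}
  {p : 'I_nu -> 'I_nu -> R}.

Local Notation sqdist := (Defs.sqdist eta thetabar).
Local Notation infdist := (Defs.infdist eta thetabar Theta).
Local Notation thetahat := (Defs.thetahat eta thetabar Theta).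
Local Notation TP := (Defs.TP eta thetabar Theta p).
Local Notation Psi := (Defs.Psi eta thetabar Theta p).
Local Notation sqerr i j z th := ((eta i z (thetabar i) - eta j z th) ^+ 2).

Implicit Types (S : seq 'rV[R]_k) (w : 'rV[R]_k -> R) (i j : 'I_nu).

Section SameMeasure.
Context {S1 S2 : seq 'rV[R]_k} {w1 w2 : 'rV[R]_k -> R}.
Hypothesis S1w1_S2w2 : same_measure S1 w1 S2 w2.

Lemma sqdist_same_measure i j : sqdist i j S1 w1 = sqdist i j S2 w2.
Proof. by apply: funext => th; exact: S1w1_S2w2. Qed.

Lemma infdist_same_measure i j : infdist i j S1 w1 = infdist i j S2 w2.
Proof. by rewrite /Defs.infdist sqdist_same_measure. Qed.

Lemma TP_same_measure : TP S1 w1 = TP S2 w2.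
Proof.
by apply: eq_bigr => i _; apply: eq_bigr => j _; rewrite infdist_same_measure.
Qed.

Lemma Psi_same_measure x : Psi x S1 w1 = Psi x S2 w2.
Proof.
apply: eq_bigr => i _; apply: eq_bigr => j _.
by rewrite /Defs.thetahat infdist_same_measure sqdist_same_measure.
Qed.

End SameMeasure.

Lemma sqdist_ge0 S w i j th :
  (forall z, z \in S -> 0 <= w z) -> 0 <= sqdist i j S w th.
Proof.
by move=> w_ge0; rewrite /Defs.sqdist big_seq sumr_ge0 // => z /w_ge0 ?; rewrite mulr_ge0 ?sqr_ge0.
Qed.

Lemma infdist_le_sqdist S w i j th :
  (forall z, z \in S -> 0 <= w z) -> Theta j th -> infdist i j S w <= sqdist i j S w th.
Proof.
move=> w_ge0 Tth; apply: ge_inf; last by exists th.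
by exists 0 => _ [th' _ <-]; exact: sqdist_ge0.
Qed.

Lemma sqdist_transfer S w x y t i j th : uniq S -> x \in S -> y \in S ->
  sqdist i j S (transfer w x y t) th =
  sqdist i j S w th + t * (sqerr i j x th - sqerr i j y th).
Proof. exact: sum_transfer. Qed.

Lemma sqdist_continuous S w i j th :
  assumption_A1 X eta Theta -> (forall z, z \in S -> X z) -> Theta j th ->
  {for th, continuous (sqdist i j S w)}.
Proof.
move=> hA1 SX Tth; rewrite /Defs.sqdist.
have -> : (fun t => \sum_(z <- S) w z * sqerr i j z t) =
          (fun t => \sum_(z <- S | z \in S) w z * sqerr i j z t).
  by apply: funext => t; rewrite big_seq.
apply: (cvg_big (P := mem S) add_continuous) => [|z /SX Xz]; first exact: nbhs_filter.
suff : {for th, continuous (fun t => w z * sqerr i j z t)} by [].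
have [U [_ TU dU _]] := hA1 j z Xz.
have ce : {for th, continuous (eta j z)}.
  by apply: differentiable_continuous; apply/dU/TU.
have cd : {for th, continuous (fun t => eta i z (thetabar i) - eta j z t)}.
  by apply: (@continuousB _ _ _ (fun=> eta i z (thetabar i)) (eta j z)); [exact: cst_continuous|exact: ce].
have -> : (fun t => w z * sqerr i j z t) = (fun=> w z) \*
  ((fun t => eta i z (thetabar i) - eta j z t) \* (fun t => eta i z (thetabar i) - eta j z t)).
  by apply: funext => t; rewrite /= expr2.
by apply: continuousM; [exact: cst_continuous|exact: continuousM].
Qed.

Lemma thetahat_argmin {S w i j} :
  assumption_A2 X eta thetabar Theta p -> is_design X S w -> 0 < TP S w -> p i j != 0 ->
  [/\ Theta j (thetahat i j S w),
      sqdist i j S w (thetahat i j S w) = infdist i j S w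
    & forall th, Theta j th -> sqdist i j S w th = infdist i j S w ->
        th = thetahat i j S w].
Proof.
move=> hA2 dS TPpos pij; have [th [Tth th_min th_uniq _]] := hA2 S w dS TPpos i j pij.
suff -> : thetahat i j S w = th by [].
by apply: xget_unique => [|th' [Tth' th'_min]]; [split|exact: th_uniq].
Qed.

Lemma transfer_design {S w x y t} :
  is_design X S w -> x \in S -> y \in S -> 0 <= t -> t <= w y ->
  is_design X S (transfer w x y t).
Proof.
move=> [uS SX w_ge0 w_sum1] xS yS t_ge0 t_le; split => // [z zS|].
  exact: transfer_ge0 w_ge0 zS t_ge0 t_le.
have := sum_transfer w t (fun=> 1) uS xS yS; rewrite subrr mulr0 addr0.
by under eq_bigr do rewrite mulr1; under [RHS]eq_bigr do rewrite mulr1; move=> ->.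
Qed.

Lemma optimal_TP_gt0 {S w S' w'} :
  is_design X S w -> 0 < TP S w -> {subset S <= S'} -> is_design X S' w' ->
  (forall w'', is_design X S' w'' -> TP S' w'' <= TP S' w') -> 0 < TP S' w'.
Proof.
move=> [uS SX w_ge0 w_sum1] TPpos SS' [uS' S'X _ _] w'_opt.
pose w0 z := if z \in S then w z else 0.
have w0_meas : same_measure S w S' w0.
  apply: same_measure_extend0 => // [z zS|z _ /negbTE zS]; by rewrite /w0 zS.
apply: (lt_le_trans TPpos); rewrite (TP_same_measure w0_meas); apply: w'_opt.
split => //; last by rewrite -(same_measure_mass w0_meas).
by move=> z _; rewrite /w0; case: ifP => // /w_ge0.
Qed.

Lemma prune_design {S w w1} :
  is_design X S w -> (forall x, x \in [seq x <- S | w x != 0] -> w1 x = w x) ->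
  is_design X [seq x <- S | w x != 0] w1 /\ same_measure [seq x <- S | w x != 0] w1 S w.
Proof.
move=> [uS SX w_ge0 w_sum1] w1E.
have meas : same_measure [seq x <- S | w x != 0] w1 S w.
  apply: same_measure_extend0 => [||z|z|z zS]; rewrite ?filter_uniq //.
  - by rewrite mem_filter => /andP[].
  - by move=> /w1E.
  - by rewrite mem_filter zS andbT negbK => /eqP.
split => //; split; rewrite ?filter_uniq ?(same_measure_mass meas) // => z.
  by rewrite mem_filter => /andP[_ /SX].
by move=> zS; rewrite w1E //; move: zS; rewrite mem_filter => /andP[_ /w_ge0].
Qed.

Section Perturbation.
Hypotheses (hp : forall i j, 0 <= p i j) (hTheta : forall i, compact (Theta i))
  (hA1 : assumption_A1 X eta Theta) (hA2 : assumption_A2 X eta thetabar Theta p).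

Lemma infdist_transfer_ge {S w x y i j e} :
  is_design X S w -> 0 < TP S w -> p i j != 0 -> x \in S -> y \in S -> 0 < e ->
  \forall t \near 0^'+,
    infdist i j S w + t * (sqerr i j x (thetahat i j S w) - sqerr i j y (thetahat i j S w) - e)
    <= infdist i j S (transfer w x y t).
Proof.
move=> dS TPpos pij xS yS e_gt0; have [uS SX w_ge0 _] := dS.
have [Tth th_min th_uniq] := thetahat_argmin hA2 dS TPpos pij.
pose b th := sqerr i j x th - sqerr i j y th.
have sq_tr t th : sqdist i j S (transfer w x y t) th = sqdist i j S w th + t * b th.
  exact: sqdist_transfer.
have ca w' : {in Theta j, continuous (sqdist i j S w')}.
  by move=> th /set_mem; exact: sqdist_continuous.
have cb : {in Theta j, continuous b}.
  have -> : b = sqdist i j S (transfer w x y 1) - sqdist i j S w.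
    by apply: funext => th; rewrite !fctE sq_tr mul1r addrC addKr.
  by move=> th Tth'; apply: continuousB; [exact: ca|exact: ca].
have th_le th : Theta j th -> sqdist i j S w (thetahat i j S w) <= sqdist i j S w th.
  by rewrite th_min; exact: infdist_le_sqdist.
have th_eq th : Theta j th -> sqdist i j S w th = sqdist i j S w (thetahat i j S w) ->
    th = thetahat i j S w.
  by rewrite th_min; exact: th_uniq.
have := unique_argmin_perturb (hTheta j) Tth (ca w) cb th_le th_eq e e_gt0.
apply: filterS => t Ht; rewrite -th_min /Defs.infdist.
apply: lb_le_inf; first by exists (sqdist i j S (transfer w x y t) (thetahat i j S w)), (thetahat i j S w).
by move=> _ [th Tth' <-]; rewrite sq_tr; exact: Ht.
Qed.

Lemma TP_transfer_ge {S w x y e} :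
  is_design X S w -> 0 < TP S w -> x \in S -> y \in S -> 0 < e ->
  \forall t \near 0^'+,
    TP S w + t * (Psi x S w - Psi y S w - e) <= TP S (transfer w x y t).
Proof.
move=> dS TPpos xS yS e_gt0.
pose P := \sum_(i < nu) \sum_(j < nu) p i j.
have P_ge0 : 0 <= P by rewrite sumr_ge0 // => i _; rewrite sumr_ge0.
(* each of the inner infima loses at most t e', and the p-weighted total is <= t e *)
pose e' := e / (P + 1).
have e'_gt0 : 0 < e' by rewrite divr_gt0 //; lra.
have e'P_le : e' * P <= e by rewrite /e' mulrAC ler_pdivrMr; nra.
pose b i j := sqerr i j x (thetahat i j S w) - sqerr i j y (thetahat i j S w).
have Psi_diff : Psi x S w - Psi y S w = \sum_(i < nu) \sum_(j < nu) p i j * b i j.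
  rewrite /Defs.Psi -sumrB; apply: eq_bigr => i _.
  by rewrite -sumrB; apply: eq_bigr => j _; rewrite mulrBr.
have near_ij : \forall t \near 0^'+, forall i j,
    p i j * (infdist i j S w + t * (b i j - e')) <= p i j * infdist i j S (transfer w x y t).
  apply: filter_forall => i; apply: filter_forall => j.
  have [->|pij] := eqVneq (p i j) 0; first by near=> t; rewrite !mul0r.
  move: (infdist_transfer_ge dS TPpos pij xS yS e'_gt0); apply: filterS => t.
  by move=> ?; rewrite ler_wpM2l.
near=> t.
have t_ge0 : 0 <= t by near: t; exact: nbhs_right_ge.
have ij_le : forall i j, p i j * (infdist i j S w + t * (b i j - e')) <=
    p i j * infdist i j S (transfer w x y t) by near: t.
apply: (@le_trans _ _ (\sum_(i < nu) \sum_(j < nu) p i j * (infdist i j S w + t * (b i j - e')))).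
  have -> : \sum_(i < nu) \sum_(j < nu) p i j * (infdist i j S w + t * (b i j - e')) =
      TP S w + t * (Psi x S w - Psi y S w) - t * e' * P.
    rewrite Psi_diff /Defs.TP /P !mulr_sumr -big_split -sumrB /=; apply: eq_bigr => i _.
    by rewrite !mulr_sumr -big_split -sumrB /=; apply: eq_bigr => j _; ring.
  have : t * (e' * P) <= t * e by exact: ler_wpM2l.
  nra.
by apply: ler_sum => i _; apply: ler_sum => j _; exact: ij_le.
Unshelve. all: by end_near.
Qed.

Lemma Psi_le_at_optimum {S w x y} :
  is_design X S w -> 0 < TP S w ->
  (forall w', is_design X S w' -> TP S w' <= TP S w) ->
  x \in S -> y \in S -> w y != 0 -> Psi x S w <= Psi y S w.
Proof.
move=> dS TPpos w_opt xS yS wy; rewrite leNgt; apply/negP => Psi_lt.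
set D := Psi x S w - Psi y S w.
have D_gt0 : 0 < D by rewrite subr_gt0.
have wy_gt0 : 0 < w y by rewrite lt_neqAle eq_sym wy; case: dS => _ _ w_ge0 _; exact: w_ge0.
have [t [t_gt0 t_le TP_le]] : exists t, [/\ 0 < t, t <= w y &
    TP S w + t * (D - D / 2) <= TP S (transfer w x y t)].
  apply: (@filter_ex R 0^'+); near=> t; split.
  - by near: t; exact: nbhs_right_gt.
  - by near: t; exact: nbhs_right_le.
  - by near: t; apply: TP_transfer_ge => //; rewrite divr_gt0.
have := w_opt _ (transfer_design dS xS yS (ltW t_gt0) t_le).
have : 0 < t * (D - D / 2) by rewrite mulr_gt0 //; lra.
lra.
Unshelve. all: by end_near.
Qed.

Lemma Psi_const_on_support {S w} :
  is_design X S w -> 0 < TP S w ->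
  (forall w', is_design X S w' -> TP S w' <= TP S w) ->
  {in [seq x <- S | w x != 0] &, forall x y, Psi x S w = Psi y S w}.
Proof.
move=> dS TPpos w_opt x y; rewrite !mem_filter => /andP[wx xS] /andP[wy yS].
by apply/le_anti/andP; split; exact: Psi_le_at_optimum.
Qed.

Lemma optimal_step {S w S' w' S1 w1} :
  is_design X S w -> 0 < TP S w -> {subset S <= S'} -> is_design X S' w' ->
  (forall w'', is_design X S' w'' -> TP S' w'' <= TP S' w') ->
  S1 = [seq x <- S' | w' x != 0] -> (forall x, x \in S1 -> w1 x = w' x) ->
  [/\ is_design X S1 w1, 0 < TP S1 w1 & exists c, {in S1, forall x, Psi x S1 w1 = c}].
Proof.
move=> dS TPpos SS' dS' w'_opt -> w1E.
have [dS1 S1_meas] := prune_design dS' w1E.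
have TP'_gt0 := optimal_TP_gt0 dS TPpos SS' dS' w'_opt.
split => //; first by rewrite (TP_same_measure S1_meas).
apply: (const_on_seq 0) => x y xS1 yS1; rewrite !(Psi_same_measure S1_meas).
exact: (Psi_const_on_support dS' TP'_gt0 w'_opt _ _ xS1 yS1).
Qed.

End Perturbation.

End OptimalDesign.

Theorem lemma3p2 (R : realType) (k nu : nat) (d : 'I_nu -> nat)
  (X : set 'rV[R]_k)
  (eta : forall i : 'I_nu, 'rV[R]_k -> 'rV[R]_(d i) -> R)
  (thetabar : forall i : 'I_nu, 'rV[R]_(d i))
  (Theta : forall i : 'I_nu, set 'rV[R]_(d i))
  (p : 'I_nu -> 'I_nu -> R)
  (hX : compact X)
  (hTheta : forall i, compact (Theta i))
  (hthetabar : forall i, Theta i (thetabar i))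
  (hp : forall i j, 0 <= p i j)
  (hA1 : assumption_A1 X eta Theta)
  (hA2 : assumption_A2 X eta thetabar Theta p)
  (Sq : nat -> seq 'rV[R]_k) (wq : nat -> 'rV[R]_k -> R)
  (h0 : is_design_supp X (Sq 0%N) (wq 0%N))
  (h0pos : 0 < TP eta thetabar Theta p (Sq 0%N) (wq 0%N))
  (hstep : forall s : nat,
     exists (S' : seq 'rV[R]_k) (w' : 'rV[R]_k -> R),
       [/\ uniq S',
           (forall x, x \in S' <->
              (x \in Sq s \/
               locmax_on X (fun y => Psi eta thetabar Theta p y (Sq s) (wq s)) x)),
           is_design X S' w',
           (forall w, is_design X S' w ->
              TP eta thetabar Theta p S' w <= TP eta thetabar Theta p S' w')
         & Sq s.+1 = [seq x <- S' | w' x != 0] /\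
           forall x, x \in Sq s.+1 -> wq s.+1 x = w' x]) :
  forall s : nat, exists c : R,
    forall x, x \in Sq s.+1 -> Psi eta thetabar Theta p x (Sq s.+1) (wq s.+1) = c.
Proof.
have step s : is_design X (Sq s) (wq s) -> 0 < TP eta thetabar Theta p (Sq s) (wq s) ->
    [/\ is_design X (Sq s.+1) (wq s.+1), 0 < TP eta thetabar Theta p (Sq s.+1) (wq s.+1)
      & exists c, {in Sq s.+1, forall x, Psi eta thetabar Theta p x (Sq s.+1) (wq s.+1) = c}].
  move=> dS TPpos; have [S' [w' [_ S'E dS' w'_opt [S1E w1E]]]] := hstep s.
  apply: (optimal_step hp hTheta hA1 hA2 dS TPpos _ dS' w'_opt S1E w1E).
  by move=> z zS; apply/S'E; left.
have inv s : is_design X (Sq s) (wq s) /\ 0 < TP eta thetabar Theta p (Sq s) (wq s).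
  elim: s => [|s [dS TPpos]]; first by case: h0.
  by have [] := step s dS TPpos.
by move=> s; have [dS TPpos] := inv s; have [] := step s dS TPpos.
Qed.
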